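(* Let $F$ be a field and $A$ a quadratic $F$-algebra. (1) If $a,b\in A$ and $B=\mathrm{span}\{1,a,b\}$ satisfies $ab\in B$, then $B$ is a subalgebra of $A$. (2) $A$ is von-Neumann finite (respectively, reversible) if and only if every $3$-dimensional subalgebra of $A$ is von-Neumann finite (respectively, reversible). (3) $A$ is both von-Neumann finite and reversible if and only if every $3$-dimensional subalgebra of $A$ is commutative.
   Context: An $F$-algebra is a vector space with bilinear, not necessarily associative, multiplication. $A$ is quadratic if it is unital and $1,a,a^2$ are linearly dependent for all $a\in A$. $A$ is von-Neumann finite if $ab=1$ implies $ba=1$, and reversible if $ab=0$ implies $ba=0$, for all $a,b\in A$. *)

(* A (not necessarily associative) F-algebra is modelled as an
   F-vector space A (an lmodType F) with a bilinear multiplication mul and a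
   two-sided unit one. A may be infinite-dimensional. *)
From HB Require Import structures.
From mathcomp Require Import all_boot all_order all_algebra.
Set Implicit Arguments. Unset Strict Implicit. Unset Printing Implicit Defensive.
Import GRing.Theory.
Local Open Scope ring_scope.

Section Defs.
Variables (F : fieldType) (A : lmodType F).

Definition bilinear_mul (mul : A -> A -> A) : Prop :=
  (forall (c : F) (x y z : A), mul (c *: x + y) z = c *: mul x z + mul y z) /\
  (forall (c : F) (x y z : A), mul z (c *: x + y) = c *: mul z x + mul z y).

Definition unit_of (mul : A -> A -> A) (one : A) : Prop :=
  forall x : A, mul one x = x /\ mul x one = x.

Definition quadratic (mul : A -> A -> A) (one : A) : Prop :=
  forall a : A, exists c0 c1 c2 : F,
    (c0 != 0 \/ c1 != 0 \/ c2 != 0) /\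
    c0 *: one + c1 *: a + c2 *: mul a a = 0.

Definition span3 (u1 u2 u3 : A) : A -> Prop :=
  fun x => exists c1 c2 c3 : F, x = c1 *: u1 + c2 *: u2 + c3 *: u3.

Definition lin_indep3 (u1 u2 u3 : A) : Prop :=
  forall c1 c2 c3 : F, c1 *: u1 + c2 *: u2 + c3 *: u3 = 0 ->
    c1 = 0 /\ c2 = 0 /\ c3 = 0.

Definition subspace (B : A -> Prop) : Prop :=
  B 0 /\ forall (c : F) (x y : A), B x -> B y -> B (c *: x + y).

Definition dim3 (B : A -> Prop) : Prop :=
  exists u1 u2 u3 : A, lin_indep3 u1 u2 u3 /\ forall x, B x <-> span3 u1 u2 u3 x.

Definition subalgebra (mul : A -> A -> A) (one : A) (B : A -> Prop) : Prop :=
  subspace B /\ B one /\ forall x y, B x -> B y -> B (mul x y).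

Definition vN_finite_on (mul : A -> A -> A) (one : A) (B : A -> Prop) : Prop :=
  forall a b, B a -> B b -> mul a b = one -> mul b a = one.

Definition reversible_on (mul : A -> A -> A) (B : A -> Prop) : Prop :=
  forall a b, B a -> B b -> mul a b = 0 -> mul b a = 0.

Definition commutative_on (mul : A -> A -> A) (B : A -> Prop) : Prop :=
  forall a b, B a -> B b -> mul a b = mul b a.

End Defs.

Definition whole (T : Type) : T -> Prop := fun _ => True.

(* Quadratic means a^2 lies in span{1, a}; polarizing (a + b)^2 then puts ba in
   span{1, a, b} as soon as ab is, and bilinearity makes that span closed under
   products.  If 1, a, b are linearly dependent, a and b commute, so a failure of
   ab = 1 => ba = 1 (or ab = 0 => ba = 0) already happens inside the
   3-dimensional subalgebra span{1, a, b}.  Conversely, a 3-dimensional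
   subalgebra is span{1, x, y} with xy = c1 + c2 x + c3 y; the shifts
   p = x - c3, q = y - c2 satisfy pq = s 1 for a scalar s, so von Neumann
   finiteness (s <> 0) or reversibility (s = 0) gives qp = pq, and a subalgebra
   span{1, p, q} generated by commuting p, q is commutative. *)

From HB Require Import structures.
From mathcomp Require Import all_boot all_order all_algebra.

Set Implicit Arguments. Unset Strict Implicit. Unset Printing Implicit Defensive.
Import GRing.Theory.
Local Open Scope ring_scope.

Section Subspaces.
Variables (F : fieldType) (A : lmodType F).
Implicit Types (S : A -> Prop) (v x y : A).

Lemma subspaceD S x y : subspace S -> S x -> S y -> S (x + y).
Proof. by case=> _ HS Sx Sy; have := HS 1 x y Sx Sy; rewrite scale1r. Qed.

Lemma subspaceZ S c x : subspace S -> S x -> S (c *: x).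
Proof. by case=> S0 HS Sx; have := HS c x 0 Sx S0; rewrite addr0. Qed.

Lemma subspaceN S x : subspace S -> S x -> S (- x).
Proof. by move=> HS Sx; rewrite -scaleN1r; apply: subspaceZ. Qed.

Lemma subspaceB S x y : subspace S -> S x -> S y -> S (x - y).
Proof. by move=> HS Sx Sy; apply: subspaceD => //; apply: subspaceN. Qed.

Lemma subspaceZ_inv S c x : subspace S -> c != 0 -> S (c *: x) -> S x.
Proof.
by move=> HS c_neq0 /(subspaceZ c^-1 HS); rewrite scalerA mulVf // scale1r.
Qed.

Lemma subspace_preimage (A' : lmodType F) (f : {linear A -> A'}) (S : A' -> Prop) :
  subspace S -> subspace (fun x => S (f x)).
Proof.
move=> HS; split; first by rewrite linear0; exact: HS.1.
by move=> c x y Sfx Sfy; rewrite linearP; apply: HS.2.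
Qed.

Lemma span3_subspace (u1 u2 u3 : A) : subspace (span3 u1 u2 u3).
Proof.
split; first by exists 0, 0, 0; rewrite !scale0r !addr0.
move=> c x y [a1 [a2 [a3 ->]]] [b1 [b2 [b3 ->]]].
exists (c * a1 + b1), (c * a2 + b2), (c * a3 + b3).
by rewrite !scalerDr !scalerA !scalerDl addrACA; congr (_ + _); exact: addrACA.
Qed.

Lemma span3_1 (u1 u2 u3 : A) : span3 u1 u2 u3 u1.
Proof. by exists 1, 0, 0; rewrite scale1r !scale0r !addr0. Qed.

Lemma span3_2 (u1 u2 u3 : A) : span3 u1 u2 u3 u2.
Proof. by exists 0, 1, 0; rewrite scale1r !scale0r add0r addr0. Qed.

Lemma span3_3 (u1 u2 u3 : A) : span3 u1 u2 u3 u3.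
Proof. by exists 0, 0, 1; rewrite scale1r !scale0r !add0r. Qed.

Lemma span3_min S (u1 u2 u3 : A) : subspace S -> S u1 -> S u2 -> S u3 ->
  forall x, span3 u1 u2 u3 x -> S x.
Proof.
move=> HS S1 S2 S3 x [c1 [c2 [c3 ->]]].
by do 2?apply: subspaceD => //; apply: subspaceZ.
Qed.

Lemma span3_exchange_first (u1 u2 u3 : A) v (d1 d2 d3 : F) :
  d1 != 0 -> v = d1 *: u1 + d2 *: u2 + d3 *: u3 ->
  forall x, span3 u1 u2 u3 x -> span3 v u2 u3 x.
Proof.
move=> d1_neq0 Ev; have HS := span3_subspace v u2 u3.
apply: span3_min => //; [apply: (subspaceZ_inv HS d1_neq0) | exact: span3_2 | exact: span3_3].
have -> : d1 *: u1 = v - d3 *: u3 - d2 *: u2 by rewrite Ev !addrK.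
apply: subspaceB => //; last by apply: subspaceZ => //; exact: span3_2.
by apply: subspaceB => //; [exact: span3_1 | apply: subspaceZ => //; exact: span3_3].
Qed.

Lemma span3_exchange (u1 u2 u3 : A) v : v != 0 -> span3 u1 u2 u3 v ->
  exists x y, [/\ span3 u1 u2 u3 x, span3 u1 u2 u3 y &
                  forall z, span3 u1 u2 u3 z -> span3 v x y z].
Proof.
move=> v_neq0 [d1 [d2 [d3 Ev]]].
have [d1_eq0 | d1_neq0] := eqVneq d1 0; last first.
  exists u2, u3; split; [exact: span3_2 | exact: span3_3 |].
  exact: span3_exchange_first d1_neq0 Ev.
have [d2_eq0 | d2_neq0] := eqVneq d2 0; last first.
  exists u1, u3; split; [exact: span3_1 | exact: span3_3 |] => z Hz.
  apply: (span3_exchange_first (u1 := u2) d2_neq0 (d2 := d1) (d3 := d3)).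
    by rewrite Ev [d1 *: u1 + _]addrC.
  by move: z Hz; apply: span3_min;
    [exact: span3_subspace | exact: span3_2 | exact: span3_1 | exact: span3_3].
have [d3_eq0 | d3_neq0] := eqVneq d3 0; last first.
  exists u2, u1; split; [exact: span3_2 | exact: span3_1 |] => z Hz.
  apply: (span3_exchange_first (u1 := u3) d3_neq0 (d2 := d2) (d3 := d1)).
    by rewrite Ev [RHS]addrC [d3 *: u3 + _]addrC addrA.
  by move: z Hz; apply: span3_min;
    [exact: span3_subspace | exact: span3_3 | exact: span3_2 | exact: span3_1].
by move: v_neq0; rewrite Ev d1_eq0 d2_eq0 d3_eq0 !scale0r !addr0 eqxx.
Qed.

End Subspaces.

Section Bilinear.
Variables (F : fieldType) (A : lmodType F) (mul : A -> A -> A) (one : A).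
Hypotheses (Hbil : bilinear_mul mul) (Hunit : unit_of mul one).

Definition lmul (x : A) : A -> A := mul x.
Definition rmul (y : A) : A -> A := mul^~ y.

HB.instance Definition _ x :=
  GRing.isLinear.Build F A A *:%R (lmul x) (fun c u v => Hbil.2 c u v x).
HB.instance Definition _ y :=
  GRing.isLinear.Build F A A *:%R (rmul y) (fun c u v => Hbil.1 c u v y).

Lemma mul0x x : mul 0 x = 0. Proof. exact: linear0 (rmul x). Qed.
Lemma mulx0 x : mul x 0 = 0. Proof. exact: linear0 (lmul x). Qed.
Lemma mulDx x y z : mul (x + y) z = mul x z + mul y z. Proof. exact: raddfD (rmul z) x y. Qed.
Lemma mulxD x y z : mul x (y + z) = mul x y + mul x z. Proof. exact: raddfD (lmul x) y z. Qed.
Lemma mulBx x y z : mul (x - y) z = mul x z - mul y z. Proof. exact: raddfB (rmul z) x y. Qed.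
Lemma mulxB x y z : mul x (y - z) = mul x y - mul x z. Proof. exact: raddfB (lmul x) y z. Qed.
Lemma mulNx x z : mul (- x) z = - mul x z. Proof. exact: raddfN (rmul z) x. Qed.
Lemma mulZx c x z : mul (c *: x) z = c *: mul x z. Proof. exact: linearZ_LR (rmul z) c x. Qed.
Lemma mulxZ c x z : mul x (c *: z) = c *: mul x z. Proof. exact: linearZ_LR (lmul x) c z. Qed.
Lemma mul1x x : mul one x = x. Proof. exact: (Hunit x).1. Qed.
Lemma mulx1 x : mul x one = x. Proof. exact: (Hunit x).2. Qed.

Lemma one_eq0_trivial : one = 0 -> forall x : A, x = 0.
Proof. by move=> one0 x; rewrite -(mul1x x) one0 mul0x. Qed.

Lemma subspace_commutant v : subspace (fun x => mul x v = mul v x).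
Proof.
split; first by rewrite mul0x mulx0.
by move=> c x y Hx Hy; rewrite Hbil.1 Hbil.2 Hx Hy.
Qed.

Lemma span3_one_commutative p q :
  mul p q = mul q p -> commutative_on mul (span3 one p q).
Proof.
move=> Epq.
have comm_gens v : mul p v = mul v p -> mul q v = mul v q ->
    forall x, span3 one p q x -> mul x v = mul v x.
  by move=> Hp Hq; apply: (span3_min (subspace_commutant v)); rewrite ?mul1x ?mulx1.
move=> x y Sx Sy.
have yp := comm_gens p (erefl _) (esym Epq) y Sy.
have yq := comm_gens q Epq (erefl _) y Sy.
exact: comm_gens (esym yp) (esym yq) x Sx.
Qed.

Lemma noncommuting_lin_indep3 a b : mul a b != mul b a -> lin_indep3 one a b.
Proof.
move=> nab c1 c2 c3 Hc.
have comm_span x y : span3 one x x y -> mul x y = mul y x.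
  by move=> Sy; apply: (span3_one_commutative (erefl (mul x x))) Sy; exact: span3_2.
have c3_0 : c3 = 0.
  apply/eqP; apply: contraNT nab => c3_neq0; apply/eqP/comm_span.
  apply: (subspaceZ_inv (span3_subspace _ _ _) c3_neq0).
  have -> : c3 *: b = - (c1 *: one + c2 *: a) by apply/eqP; rewrite -addr_eq0 addrC Hc.
  by exists (- c1), (- c2), 0; rewrite scale0r addr0 !scaleNr opprD.
rewrite c3_0 scale0r addr0 in Hc.
have c2_0 : c2 = 0.
  apply/eqP; apply: contraNT nab => c2_neq0; rewrite eq_sym; apply/eqP/comm_span.
  apply: (subspaceZ_inv (span3_subspace _ _ _) c2_neq0).
  have -> : c2 *: a = - (c1 *: one) by apply/eqP; rewrite -addr_eq0 addrC Hc.
  by exists (- c1), 0, 0; rewrite !scale0r !addr0 scaleNr.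
rewrite c2_0 scale0r addr0 in Hc.
split=> //; apply/eqP; apply: contraNT nab => c1_neq0.
have one0 : one = 0 by move/eqP: Hc; rewrite scaler_eq0 (negbTE c1_neq0) => /eqP.
by rewrite !(one_eq0_trivial one0 (mul _ _)).
Qed.

Lemma commute_of_vN_reversible a b :
  vN_finite_on mul one (@whole A) -> reversible_on mul (@whole A) ->
  span3 one a b (mul a b) -> mul a b = mul b a.
Proof.
move=> HvN Hrev [c1 [c2 [c3 Eab]]].
set p := a - c3 *: one; set q := b - c2 *: one; set s := c1 + c3 * c2.
have Epq : mul p q = s *: one.
  rewrite /p /q mulBx !mulxB !mulZx !mulxZ !mul1x mulx1 scalerA Eab.
  by rewrite [c1 *: one + _ + _]addrAC addrK opprB addrCA addrK /s scalerDl addrC.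
have Eqp : mul q p = mul p q.
  rewrite Epq; have [s0 | s_neq0] := eqVneq s 0.
    by rewrite s0 scale0r; apply: Hrev => //; rewrite Epq s0 scale0r.
  have := HvN p (s^-1 *: q) I I; rewrite mulxZ Epq scalerA mulVf // scale1r mulZx.
  by move=> /(_ erefl) Eqp; rewrite -[mul q p]scale1r -(mulfV s_neq0) -scalerA Eqp.
apply: (span3_one_commutative (esym Eqp)).
- by exists c3, 1, 0; rewrite scale1r scale0r addr0 /p addrC subrK.
- by exists c2, 0, 1; rewrite scale1r scale0r addr0 /q addrC subrK.
Qed.

Lemma dim3_subalgebra_commutative B :
  vN_finite_on mul one (@whole A) -> reversible_on mul (@whole A) ->
  subalgebra mul one B -> dim3 B -> commutative_on mul B.
Proof.
move=> HvN Hrev [_ [B1 BM]] [u1 [u2 [u3 [_ HB]]]] a b Ba Bb.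
have [one0 | one_neq0] := eqVneq one 0.
  by rewrite (one_eq0_trivial one0 (mul a b)) (one_eq0_trivial one0 (mul b a)).
have [x [y [Sx Sy span3_xy]]] := span3_exchange one_neq0 ((HB one).1 B1).
have Bsub z : B z -> span3 one x y z by move=> /HB; exact: span3_xy.
have Exy : mul x y = mul y x.
  by apply: commute_of_vN_reversible HvN Hrev _; apply/Bsub/BM; exact/HB.
exact: span3_one_commutative Exy a b (Bsub a Ba) (Bsub b Bb).
Qed.

(* [vN_finite_on mul one B] is [swap_stable B one], [reversible_on mul B] is [swap_stable B 0]. *)
Definition swap_stable (B : A -> Prop) (t : A) :=
  forall a b, B a -> B b -> mul a b = t -> mul b a = t.

Lemma commutative_swap_stable B t : commutative_on mul B -> swap_stable B t.
Proof. by move=> Hcomm a b Ba Bb; rewrite Hcomm. Qed.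

Section Quadratic.
Hypothesis Hquad : quadratic mul one.

Lemma sqr_in_subspace S a : subspace S -> S one -> S a -> S (mul a a).
Proof.
move=> HS S1 Sa; have [c0 [c1 [c2 [Hnz Hc]]]] := Hquad a.
have [c2_0 | c2_neq0] := eqVneq c2 0; last first.
  apply: (subspaceZ_inv HS c2_neq0).
  have -> : c2 *: mul a a = - (c0 *: one + c1 *: a) by apply/eqP; rewrite -addr_eq0 addrC Hc.
  by apply: subspaceN => //; apply: subspaceD => //; apply: subspaceZ.
rewrite c2_0 scale0r addr0 in Hc.
have [c1_0 | c1_neq0] := eqVneq c1 0; last first.
  apply: (subspaceZ_inv HS c1_neq0).
  rewrite -mulZx; have -> : c1 *: a = - (c0 *: one) by apply/eqP; rewrite -addr_eq0 addrC Hc.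
  by rewrite mulNx mulZx mul1x; apply: subspaceN => //; apply: subspaceZ.
rewrite c1_0 scale0r addr0 in Hc.
have c0_neq0 : c0 != 0 by case: Hnz => [// | []]; rewrite ?c1_0 ?c2_0 eqxx.
have one0 : one = 0 by move/eqP: Hc; rewrite scaler_eq0 (negbTE c0_neq0) => /eqP.
by rewrite (one_eq0_trivial one0 (mul a a)); exact: HS.1.
Qed.

Lemma span3_subalgebra a b :
  span3 one a b (mul a b) -> subalgebra mul one (span3 one a b).
Proof.
move=> Sab; set S := span3 one a b; have HS : subspace S := span3_subspace one a b.
have S1 : S one := span3_1 one a b.
have Sa : S a := span3_2 one a b.
have Sb : S b := span3_3 one a b.
have Ssqr x : S x -> S (mul x x) by move=> Sx; exact: sqr_in_subspace.
have Sba : S (mul b a).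
  have -> : mul b a = mul (a + b) (a + b) - mul a a - mul a b - mul b b.
    apply/eqP; rewrite eq_sym !subr_eq mulDx !mulxD; apply/eqP.
    by rewrite addrC [mul a a + _]addrC addrA.
  apply: subspaceB => //; last exact: Ssqr.
  apply: subspaceB => //.
  by apply: subspaceB => //; apply: Ssqr => //; exact: subspaceD.
split=> //; split=> // x y Sx Sy.
have Sgy g : S (mul g one) -> S (mul g a) -> S (mul g b) -> S (mul g y).
  by move=> *; move: y Sy; apply: (span3_min (subspace_preimage (lmul g) HS)).
by move: x Sx; apply: (span3_min (subspace_preimage (rmul y) HS)); apply: Sgy;
  rewrite ?mul1x ?mulx1 //; exact: Ssqr.
Qed.

Lemma swap_stable_of_subalgebras3 t : (forall a b, span3 one a b t) ->
  (forall B, subalgebra mul one B -> dim3 B -> swap_stable B t) ->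
  swap_stable (@whole A) t.
Proof.
move=> St Hsub a b _ _ Eab.
have [<- // | nab] := eqVneq (mul a b) (mul b a).
have Ssub : subalgebra mul one (span3 one a b) by apply: span3_subalgebra; rewrite Eab.
have Sdim : dim3 (span3 one a b).
  by exists one, a, b; split=> //; exact: noncommuting_lin_indep3.
exact: Hsub _ Ssub Sdim a b (span3_2 _ _ _) (span3_3 _ _ _) Eab.
Qed.

End Quadratic.

End Bilinear.

Theorem lemma3p4 (F : fieldType) (A : lmodType F) (mul : A -> A -> A) (one : A)
    (Hbil : bilinear_mul mul) (Hunit : unit_of mul one) (Hquad : quadratic mul one) :
  (* (1) *)
  (forall a b : A, span3 one a b (mul a b) -> subalgebra mul one (span3 one a b)) /\
  (* (2) von Neumann finiteness *)
  (vN_finite_on mul one (@whole A) <->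
     (forall B : A -> Prop, subalgebra mul one B -> dim3 B -> vN_finite_on mul one B)) /\
  (* (2) reversibility *)
  (reversible_on mul (@whole A) <->
     (forall B : A -> Prop, subalgebra mul one B -> dim3 B -> reversible_on mul B)) /\
  (* (3) *)
  ((vN_finite_on mul one (@whole A) /\ reversible_on mul (@whole A)) <->
     (forall B : A -> Prop, subalgebra mul one B -> dim3 B -> commutative_on mul B)).
Proof.
have swap_whole := swap_stable_of_subalgebras3 Hbil Hunit Hquad.
have one_in_span a b : span3 one a b one := span3_1 one a b.
have zero_in_span a b : span3 one a b 0 := (span3_subspace one a b).1.
split; first exact: span3_subalgebra.
split; [|split].
- by split=> [H B _ _ a b _ _ | ]; [exact: H | exact: swap_whole].
- by split=> [H B _ _ a b _ _ | ]; [exact: H | exact: swap_whole].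
- split=> [[HvN Hrev] B | Hcomm]; first exact: dim3_subalgebra_commutative.
  by split; apply: swap_whole => // B HB HB3; apply: commutative_swap_stable; exact: Hcomm.
Qed.
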